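(* Let $T:\mathbb{Z}_{\ge 0}\times\mathbb{Z}_{\ge 0}\to\mathbb{R}$ be the function defined by $T(n,0)=0$ for all $n\ge 0$, $T(0,q)=0$ for all $q\ge 0$, and, for all $n\ge 1$ and $q\ge 1$, $$T(n,q) \;=\; n+\frac{2}{n(q+1)}\sum_{j=0}^{n-1}\sum_{k=0}^{q} T(j,k).$$ Then for all integers $n\ge 0$ and $q\ge 1$, $$T(n,q)\;\le\; 2nH_q \;=\; O(n\log q),$$ where $H_q=\sum_{i=1}^{q} 1/i$ is the $q$-th harmonic number.
   Context: The recurrence models the average number of item comparisons needed to answer $q$ distinct selection queries (queries asking for the item of rank $k$) online on an initially unsorted array of $n$ distinct items, averaged over all input permutations (with the $q$ queries equally likely to split over the pivot in any of the $q+1$ ways), using Hoare's quickselect restricted to the unsorted subinterval containing the queried rank, with the pivot always chosen as the last item of the current subinterval and with all previously placed pivots remembered (so work already done by earlier queries is reused). The harmonic numbers satisfy $H_0=0$. *)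

From HB Require Import structures.
From mathcomp Require Import all_boot all_order all_algebra.
Set Implicit Arguments. Unset Strict Implicit. Unset Printing Implicit Defensive.
Import Order.TTheory GRing.Theory Num.Theory.
Local Open Scope ring_scope.

Definition harmonic (R : realFieldType) (q : nat) : R :=
  \sum_(1 <= i < q.+1) (i%:R)^-1.

Definition quickselect_rec (R : realFieldType) (T : nat -> nat -> R) : Prop :=
  (forall n, T n 0%N = 0) /\ (forall q, T 0%N q = 0) /\
  (forall n q, (1 <= n)%N -> (1 <= q)%N ->
     T n q = n%:R + 2 / (n%:R * (q.+1)%:R) *
               \sum_(j < n) \sum_(k < q.+1) T j k).

From HB Require Import structures.
From mathcomp Require Import all_boot all_order all_algebra.
Import Order.TTheory GRing.Theory Num.Theory.
Local Open Scope ring_scope.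

(* We prove the stronger claim T(n,k) <= 2 n H_k for all n and
   all k (the case k = 0 being trivial since H_0 = 0), by strong induction
   on n.  For n, q >= 1 the induction hypothesis bounds the double sum of
   the recurrence termwise, and two closed forms evaluate the result:
     - the Gauss sum  2 sum_{j<n} j = n (n - 1),
     - the harmonic sum  sum_{k<=q} H_k = (q+1) H_q - q,
   the latter giving  2 sum_{k<=q} H_k <= (q+1)(2 H_q - 1)  when q >= 1.
   Hence the recurrence yields T(n,q) <= n + (n-1)(2 H_q - 1), which is at
   most 2 n H_q because H_q >= 1.  The file first develops these
   harmonic-number and summation facts over an arbitrary real field, then
   the bound on the double sum, and finally the induction. *)

Section HarmonicSums.
Variable R : realFieldType.
Implicit Types (n q : nat).

Lemma harmonic0 : harmonic R 0 = 0.
Proof. by rewrite /harmonic big_geq. Qed.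

Lemma harmonicS q : harmonic R q.+1 = harmonic R q + (q.+1)%:R^-1.
Proof. by rewrite /harmonic big_nat_recr. Qed.

Lemma harmonic_ge1 q : (1 <= q)%N -> 1 <= harmonic R q.
Proof.
case: q => // q _; elim: q => [|q IH].
  by rewrite harmonicS harmonic0 add0r invr1.
by rewrite harmonicS; apply: le_trans IH _; rewrite lerDl invr_ge0 ler0n.
Qed.

Lemma sum_harmonic q :
  \sum_(k < q.+1) harmonic R k + q%:R = (q.+1)%:R * harmonic R q.
Proof.
elim: q => [|q IH].
  by rewrite big_ord_recr big_ord0 /= harmonic0 !add0r mulr0.
rewrite big_ord_recr /= -[(q.+2)%:R]natr1 mulrDl mul1r addrAC; congr (_ + _).
by rewrite harmonicS mulrDr mulfV ?pnatr_eq0 // -IH -natr1 addrA.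
Qed.

Lemma sum_harmonic_le q : (1 <= q)%N ->
  2 * \sum_(k < q.+1) harmonic R k <= (q.+1)%:R * (2 * harmonic R q - 1).
Proof.
move=> q_ge1; rewrite (canRL (addrK _) (sum_harmonic q)).
rewrite !mulrBr mulr1 mulrCA lerD2l lerN2 -natrM ler_nat.
by rewrite mul2n -addnn -addn1 leq_add2l.
Qed.

Lemma sum_nat_double n : 2 * \sum_(j < n) (j%:R : R) = n%:R * (n%:R - 1).
Proof.
elim: n => [|n IH]; first by rewrite big_ord0 mulr0 mul0r.
rewrite big_ord_recr /= mulrDr IH -[(n.+1)%:R]natr1 addrK.
by rewrite mulrBr mulr1 !mulrDl !mul1r -addrA addKr.
Qed.

Lemma step_inequality (a h : R) :
  1 <= h -> a + (a - 1) * (2 * h - 1) <= 2 * a * h.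
Proof.
move=> h_ge1; rewrite mulrBr mulr1 addrCA subKr -mulrA [2 * (a * h)]mulrCA.
rewrite mulrBl mul1r -addrA gerDl addrC subr_le0 mulr_natl mulr2n.
have h_ge0 := le_trans ler01 h_ge1.
by apply: le_trans h_ge1 _; rewrite lerDl.
Qed.

End HarmonicSums.

Section QuickselectBound.
Variables (R : realFieldType) (T : nat -> nat -> R).

Lemma double_sum_bound n q : (1 <= q)%N ->
  (forall j k, (j < n)%N -> T j k <= 2 * j%:R * harmonic R k) ->
  2 * \sum_(j < n) \sum_(k < q.+1) T j k <=
    (n%:R * (q.+1)%:R) * ((n%:R - 1) * (2 * harmonic R q - 1)).
Proof.
move=> q_ge1 IH; set c := 2 * harmonic R q - 1.
have row_bound : \sum_(j < n) \sum_(k < q.+1) T j k <=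
                 \sum_(j < n) j%:R * ((q.+1)%:R * c).
  apply: ler_sum => j _.
  apply: (@le_trans _ _ (\sum_(k < q.+1) 2 * j%:R * harmonic R k)).
    by apply: ler_sum => k _; apply: IH.
  rewrite -mulr_sumr [2 * _]mulrC -mulrA; apply: ler_wpM2l; first exact: ler0n.
  exact: sum_harmonic_le.
rewrite -mulr_suml in row_bound.
apply: le_trans (ler_wpM2l _ row_bound) _ => //.
by rewrite !mulrA sum_nat_double -/c [_ * (_ - 1) * _]mulrAC.
Qed.

Hypothesis hT : quickselect_rec T.

Lemma quickselect_bound n k : T n k <= 2 * n%:R * harmonic R k.
Proof.
case: hT => T_n0 [T_0q T_rec].
elim/ltn_ind: n k => n IH [|q]; first by rewrite T_n0 harmonic0 mulr0.
case: n IH => [|n] IH; first by rewrite T_0q mulr0 mul0r.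
set a : R := (n.+1)%:R; set c : R := (q.+2)%:R.
have a_gt0 : 0 < a by rewrite ltr0n.
have c_gt0 : 0 < c by rewrite ltr0n.
have sum_le := double_sum_bound (n.+1) (q.+1) isT
  (fun j k lt_jn => IH j lt_jn k).
rewrite T_rec // -/a -/c [2 / _ * _]mulrAC [2 * _ * _^-1]mulrC.
apply: (@le_trans _ _ (a + (a - 1) * (2 * harmonic R q.+1 - 1))); last first.
  exact/step_inequality/harmonic_ge1.
rewrite lerD2l; apply: le_trans (ler_wpM2l _ sum_le) _.
  by rewrite invr_ge0 mulr_ge0 // ltW.
by rewrite mulKf // mulf_neq0 // gt_eqF.
Qed.

End QuickselectBound.

Theorem mainTheorem1 (R : realFieldType) (T : nat -> nat -> R)
  (hT : quickselect_rec T) (n q : nat) (hq : (1 <= q)%N) :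
  T n q <= 2 * n%:R * harmonic R q.
Proof. exact: quickselect_bound. Qed.
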